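(* For every $\mathcal{C}$-algebra $A$, the derived operation $\widetilde{\omega}_{\Phi(A)}$ on $s_A(|A|)$, defined by $\widetilde{\omega}_{\Phi(A)}(u_1,\dots,u_k)=\Phi(\theta)(\tilde{\mathbf w})$ (where $u_i=s_A(a_i)$ with $a_i\in A$, $\theta:F\to A$ is the homomorphism with $\theta(x_i)=a_i$ for $i=1,\dots,k$, and $\tilde{\mathbf w}=s_F(\omega(x_1,\dots,x_k))\in\Phi(F)$), coincides with the induced operation $\omega^*_A$ on $s_A(|A|)$, that is, $$s_A(\omega_A(a_1,\dots,a_k))=\widetilde{\omega}_{\Phi(A)}(s_A(a_1),\dots,s_A(a_k))$$ for all $a_1,\dots,a_k\in A$.
   Context: Let $\mathcal{V}$ be a variety of universal algebras of signature $\Omega$, and let $\mathrm{Th}^0(\mathcal{V})$ be the category of free $\mathcal{V}$-algebras over finite subsets of a fixed infinite set of variables, with their homomorphisms; it carries the forgetful functor to sets assigning to an algebra $A$ its underlying set $|A|$. Let $\mathcal{C}$ be a full subcategory of $\mathrm{Th}^0(\mathcal{V})$ containing the monogenic free algebra $A_0$ freely generated by $x_0$, and let $\Phi$ be an automorphism of $\mathcal{C}$. For a $\mathcal{C}$-algebra $A$ and $a\in A$, let $\alpha^A_a:A_0\to A$ be the unique homomorphism with $\alpha^A_a(x_0)=a$. Fix a basis $X$ of $\Phi^{-1}(A_0)$, let $\eta_0:\Phi^{-1}(A_0)\to A_0$ be the homomorphism sending every element of $X$ to $x_0$ (if $\Phi^{-1}(A_0)\cong A_0$, take $\eta_0$ to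 be an isomorphism; if $\Phi(A_0)=A_0$, take $\eta_0=1_{A_0}$), and put $\eta=\Phi(\eta_0):A_0\to\Phi(A_0)$. The main function of $\Phi$ is the family of (injective) maps $s_A:|A|\to|\Phi(A)|$, $s_A(a)=\Phi(\alpha^A_a)\circ\eta\,(x_0)$. For a $k$-ary operation symbol $\omega\in\Omega$ with corresponding operation $\omega_A$ on $A$, the induced operation $\omega^*_A$ on $s_A(|A|)$ is defined by $\omega^*_A(s_A(a_1),\dots,s_A(a_k))=s_A(\omega_A(a_1,\dots,a_k))$. Assume all arities of operations of $\mathcal{V}$ are less than some $n$, and let $F$ be a $\mathcal{C}$-algebra with basis $\{x_1,\dots,x_n\}$; set $\mathbf w=\omega(x_1,\dots,x_k)\in F$ and $\tilde{\mathbf w}=s_F(\mathbf w)\in\Phi(F)$. *)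

From Stdlib Require Import ClassicalEpsilon.
From HB Require Import structures.
From mathcomp Require Import all_boot finmap.

Set Implicit Arguments.
Unset Strict Implicit.
Unset Printing Implicit Defensive.

Local Open Scope fset_scope.

Record signature := Signature { symb : Type; arity : symb -> nat }.

Record algebra (s : signature) := Algebra {
  carrier :> Type;
  op : forall o : symb s, ('I_(arity o) -> carrier) -> carrier }.
Arguments op {s} a o _ : rename.

Inductive term (s : signature) :=
  | Var of nat
  | App (o : symb s) of ('I_(arity o) -> term s).

Fixpoint eval (s : signature) (A : algebra s) (v : nat -> A) (t : term s) : A :=
  match t with
  | Var x => v x
  | App o ts => op A o (fun i => eval v (ts i))
  end.

(* A variety is given by a set of identities (Birkhoff). *)
Definition identities (s : signature) := term s -> term s -> Prop.

Definition models (s : signature) (E : identities s) (A : algebra s) : Prop :=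
  forall t u, E t u -> forall v : nat -> A, eval v t = eval v u.

Definition is_hom (s : signature) (A B : algebra s) (f : A -> B) : Prop :=
  forall o (args : 'I_(arity o) -> A), f (op A o args) = op B o (fun i => f (args i)).

Definition ext_eq (A B : Type) (f g : A -> B) : Prop := forall x, f x = g x.

Definition free_over (s : signature) (E : identities s) (A : algebra s)
    (S : {fset nat}) (g : nat -> A) : Prop :=
  models E A /\
  forall B : algebra s, models E B -> forall v : nat -> B,
    exists h : A -> B,
      [/\ is_hom h, (forall x, x \in S -> h (g x) = v x) &
          forall h' : A -> B, is_hom h' -> (forall x, x \in S -> h' (g x) = v x) ->
            ext_eq h' h].

Arguments free_over {s} E A S g.

Definition is_basis (s : signature) (E : identities s) (A : algebra s) (X : A -> Prop) : Prop :=
  forall B : algebra s, models E B -> forall v : A -> B,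
    exists h : A -> B,
      [/\ is_hom h, (forall x, X x -> h x = v x) &
          forall h' : A -> B, is_hom h' -> (forall x, X x -> h' x = v x) -> ext_eq h' h].

Definition is_iso (s : signature) (A B : algebra s) (f : A -> B) : Prop :=
  is_hom f /\ exists g : B -> A, [/\ is_hom g, ext_eq (g \o f) id & ext_eq (f \o g) id].

(* Phi = (Phio, Phih) is an automorphism of the full subcategory C (objects
   objC) of Th^0(V): a functor C -> C which is bijective on objects and on
   morphisms (hom-sets); morphisms are homomorphisms, compared extensionally. *)
Definition is_automorphism (s : signature) (Fr : {fset nat} -> algebra s)
    (objC : {fset nat} -> Prop) (Phio : {fset nat} -> {fset nat})
    (Phih : forall S T, (Fr S -> Fr T) -> (Fr (Phio S) -> Fr (Phio T))) : Prop :=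
  (forall S, objC S -> objC (Phio S)) /\
  (forall S T, objC S -> objC T -> Phio S = Phio T -> S = T) /\
  (forall T, objC T -> exists2 S, objC S & Phio S = T) /\
  (forall S T (f : Fr S -> Fr T), objC S -> objC T -> is_hom f -> is_hom (Phih S T f)) /\
  (forall S, objC S -> ext_eq (Phih S S id) id) /\
  (forall S T U (f : Fr S -> Fr T) (g : Fr T -> Fr U), objC S -> objC T -> objC U ->
     is_hom f -> is_hom g ->
     ext_eq (Phih S U (g \o f)) (Phih T U g \o Phih S T f)) /\
  (forall S T (f g : Fr S -> Fr T), objC S -> objC T -> is_hom f -> is_hom g ->
     ext_eq f g -> ext_eq (Phih S T f) (Phih S T g)) /\
  (forall S T (f g : Fr S -> Fr T), objC S -> objC T -> is_hom f -> is_hom g ->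
     ext_eq (Phih S T f) (Phih S T g) -> ext_eq f g) /\
  (forall S T (h : Fr (Phio S) -> Fr (Phio T)), objC S -> objC T -> is_hom h ->
     exists2 f : Fr S -> Fr T, is_hom f & ext_eq (Phih S T f) h).

(* The monogenic free algebra A_0 is Fr [fset x0] with x0 := 0. *)
Definition A0 : {fset nat} := [fset 0%N].

(* alpha^A_a : A_0 -> A, the homomorphism with x0 |-> a (chosen by epsilon;
   it is unique up to extensional equality by freeness of A_0). *)
Definition alpha (s : signature) (Fr : {fset nat} -> algebra s)
    (gen : forall S, nat -> Fr S) (A : {fset nat}) (a : Fr A) : Fr A0 -> Fr A :=
  epsilon (inhabits (fun _ => a)) (fun f => is_hom f /\ f (gen A0 0%N) = a).
Arguments alpha {s Fr} gen A a.

(* The main function s_A(a) = Phi(alpha^A_a) (eta (x0)), where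
   eta = Phi(eta0) : A_0 = Phi(B0) -> Phi(A_0), B0 = Phi^{-1}(A_0) (e : Phio B0 = A0). *)
Definition main_fn (s : signature) (Fr : {fset nat} -> algebra s)
    (gen : forall S, nat -> Fr S) (Phio : {fset nat} -> {fset nat})
    (Phih : forall S T, (Fr S -> Fr T) -> (Fr (Phio S) -> Fr (Phio T)))
    (B0 : {fset nat}) (e : Phio B0 = A0) (eta0 : Fr B0 -> Fr A0)
    (A : {fset nat}) (a : Fr A) : Fr (Phio A) :=
  Phih A0 A (alpha gen A a)
    (Phih B0 A0 eta0 (eq_rect A0 (fun S => Fr S) (gen A0 0%N) (Phio B0) (esym e))).

From HB Require Import structures.
From mathcomp Require Import all_boot finmap.
From Stdlib Require Import ClassicalEpsilon FunctionalExtensionality.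

Set Implicit Arguments.
Unset Strict Implicit.
Unset Printing Implicit Defensive.

(* The main function is natural: for a homomorphism θ : B -> C, the universal
   property of A_0 gives α^C_{θ b} = θ ∘ α^B_b, so functoriality of Φ yields
   s_C(θ b) = Φ(θ)(s_B b).  Taking θ with θ(x_i) = a_i and b = ω(x_1,…,x_k),
   so that θ b = ω_A(a_1,…,a_k), gives the theorem. *)

Lemma is_hom_comp (s : signature) (A B C : algebra s) (f : A -> B) (g : B -> C) :
  is_hom f -> is_hom g -> is_hom (g \o f).
Proof. by move=> f_hom g_hom o args /=; rewrite f_hom g_hom. Qed.

Section MainFunction.

Variables (s : signature) (E : identities s).
Variables (Fr : {fset nat} -> algebra s) (gen : forall S, nat -> Fr S).
Hypothesis Hfree : forall S, free_over E (Fr S) S (gen S).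

Lemma alphaP (B : {fset nat}) (b : Fr B) :
  is_hom (alpha gen B b) /\ alpha gen B b (gen A0 0%N) = b.
Proof.
rewrite /alpha; apply epsilon_spec.
have [_ univ] := Hfree A0.
have [h [h_hom h_gen _]] := univ (Fr B) (proj1 (Hfree B)) (fun _ => b).
by exists h; split => //; apply: h_gen; rewrite inE.
Qed.

Lemma alpha_comp (B C : {fset nat}) (f : Fr B -> Fr C) (b : Fr B) :
  is_hom f -> ext_eq (alpha gen C (f b)) (f \o alpha gen B b).
Proof.
move=> f_hom.
have [alphaB_hom alphaB_gen] := alphaP b.
have [alphaC_hom alphaC_gen] := alphaP (f b).
have comp_hom := is_hom_comp alphaB_hom f_hom.
have [_ univ] := Hfree A0.
have [h [_ _ h_uniq]] := univ (Fr C) (proj1 (Hfree C)) (fun _ => f b).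
move=> y; rewrite (h_uniq _ alphaC_hom) ?(h_uniq _ comp_hom) //.
- by move=> z; rewrite inE => /eqP ->; rewrite /= alphaB_gen.
- by move=> z; rewrite inE => /eqP ->; exact: alphaC_gen.
Qed.

Variables (objC : {fset nat} -> Prop) (Phio : {fset nat} -> {fset nat}).
Variable Phih : forall S T, (Fr S -> Fr T) -> (Fr (Phio S) -> Fr (Phio T)).
Hypothesis objC_A0 : objC A0.
Hypothesis Phih_comp : forall S T U (f : Fr S -> Fr T) (g : Fr T -> Fr U),
  objC S -> objC T -> objC U -> is_hom f -> is_hom g ->
  ext_eq (@Phih S U (g \o f)) (@Phih T U g \o @Phih S T f).
Hypothesis Phih_ext : forall S T (f g : Fr S -> Fr T),
  objC S -> objC T -> is_hom f -> is_hom g ->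
  ext_eq f g -> ext_eq (@Phih S T f) (@Phih S T g).

Lemma main_fn_hom (B0 : {fset nat}) (e : Phio B0 = A0) (eta0 : Fr B0 -> Fr A0)
    (B C : {fset nat}) (f : Fr B -> Fr C) (b : Fr B) :
  objC B -> objC C -> is_hom f ->
  main_fn gen Phih e eta0 (f b) = @Phih B C f (main_fn gen Phih e eta0 b).
Proof.
move=> objC_B objC_C f_hom.
have [alphaB_hom _] := alphaP b.
have [alphaC_hom _] := alphaP (f b).
have comp_hom := is_hom_comp alphaB_hom f_hom.
rewrite /main_fn (Phih_ext objC_A0 objC_C alphaC_hom comp_hom (alpha_comp b f_hom)).
exact: Phih_comp.
Qed.

End MainFunction.

Theorem theorem4
  (s : signature) (E : identities s)
  (* Th^0(V): free V-algebras over finite subsets of the variables nat *)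
  (Fr : {fset nat} -> algebra s) (gen : forall S, nat -> Fr S)
  (Hfree : forall S, free_over E (Fr S) S (gen S))
  (* C: full subcategory containing A_0 *)
  (objC : {fset nat} -> Prop) (HA0 : objC A0)
  (* Phi: automorphism of C *)
  (Phio : {fset nat} -> {fset nat})
  (Phih : forall S T, (Fr S -> Fr T) -> (Fr (Phio S) -> Fr (Phio T)))
  (HPhi : is_automorphism objC Phih)
  (* B0 = Phi^{-1}(A_0), basis X of B0, eta0 : B0 -> A_0 *)
  (B0 : {fset nat}) (HB0 : objC B0) (e : Phio B0 = A0)
  (X : Fr B0 -> Prop) (HX : is_basis E X)
  (eta0 : Fr B0 -> Fr A0) (Heta0 : is_hom eta0)
  (Heta0X : ~ (exists f : Fr B0 -> Fr A0, is_iso f) -> forall x, X x -> eta0 x = gen A0 0%N)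
  (Heta0iso : (exists f : Fr B0 -> Fr A0, is_iso f) -> is_iso eta0)
  (Heta0id : forall h : B0 = A0, forall y, eta0 y = eq_rect B0 (fun S => Fr S) y A0 h)
  (* all arities < n; F a C-algebra with basis {x_1, ..., x_n} *)
  (n : nat) (Har : forall o : symb s, (arity o < n)%N)
  (F : {fset nat}) (HF : objC F) (x : 'I_n -> Fr F) (Hxinj : injective x)
  (Hxbasis : is_basis E (fun y => exists i, y = x i))
  (w_op : symb s) :
  let k := arity w_op in
  let Hkn : (k <= n)%N := ltnW (Har w_op) in
  let w : Fr F := op (Fr F) w_op (fun i => x (widen_ord Hkn i)) in
  let w_tilde := main_fn gen Phih e eta0 w in
  forall (A : {fset nat}), objC A ->
  forall (a : 'I_k -> Fr A) (theta : Fr F -> Fr A),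
    is_hom theta -> (forall i : 'I_k, theta (x (widen_ord Hkn i)) = a i) ->
    main_fn gen Phih e eta0 (op (Fr A) w_op a) = Phih F A theta w_tilde.
Proof.
move=> k Hkn w w_tilde A HA a theta theta_hom theta_x.
have [_ [_ [_ [_ [_ [Phih_comp [Phih_ext _]]]]]]] := HPhi.
have theta_w : theta w = op (Fr A) w_op a.
  rewrite /w theta_hom; congr (op _ _ _).
  by apply: functional_extensionality => i; exact: theta_x.
rewrite -theta_w.
exact: (main_fn_hom Hfree HA0 Phih_comp Phih_ext e eta0 w HF HA theta_hom).
Qed.
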